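(* Let $T\colon\mathbb R\to\mathbb R$ be nonexpansive with $\operatorname{Fix}T=\varnothing$, let $v:=P_{\overline{\operatorname{ran}}(\mathrm{Id}-T)}0$ and assume $v\in\operatorname{ran}(\mathrm{Id}-T)$. Then: (i) for every $x\in\mathbb R$, the sequence $(T^nx+nv)_{n\in\mathbb N}$ converges; (ii) the map $\mathbb R\to\mathbb R\colon x\mapsto\lim_{n\to\infty}(T^nx+nv)$ is nonexpansive; (iii) if $T$ is firmly nonexpansive, then $x\mapsto\lim_{n\to\infty}(T^nx+nv)$ is firmly nonexpansive.
   Context: $v$ is the element of minimal absolute value of the closure of $\operatorname{ran}(\mathrm{Id}-T)$. A map $T$ is firmly nonexpansive if $\|Tx-Ty\|^2+\|(\mathrm{Id}-T)x-(\mathrm{Id}-T)y\|^2\le\|x-y\|^2$ for all $x,y$. *)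

From Stdlib Require Import Reals Lra.
Open Scope R_scope.

Definition nonexpansive (T : R -> R) : Prop :=
  forall x y, Rabs (T x - T y) <= Rabs (x - y).

Definition firmly_nonexpansive (T : R -> R) : Prop :=
  forall x y, (T x - T y)^2 + ((x - T x) - (y - T y))^2 <= (x - y)^2.

Definition Fix (T : R -> R) (x : R) : Prop := T x = x.

Definition ran_IdmT (T : R -> R) (w : R) : Prop := exists x, x - T x = w.

Definition closure (S : R -> Prop) (w : R) : Prop :=
  forall eps, 0 < eps -> exists s, S s /\ Rabs (s - w) < eps.

(* v = P_{closure ran(Id-T)} 0 : the element of minimal absolute value
   of the closure of ran(Id - T) (the projection of 0 onto this closed
   convex set). *)
Definition is_min_disp (T : R -> R) (v : R) : Prop :=
  closure (ran_IdmT T) v /\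
  forall w, closure (ran_IdmT T) w -> Rabs v <= Rabs w.

(* On the real line the displacement [x - T x] of a nonexpansive map without
   fixed points has constant sign by the intermediate value theorem, so the
   minimal displacement [v] satisfies [v * (x - T x - v) >= 0] everywhere.
   A point with displacement [v] keeps it under [T] (nonexpansiveness forbids
   a larger one), hence its orbit is [x0 - n v].  For any [x] the sequence
   [T^n x + n v] is then monotone and stays within [|x - x0|] of [x0], so it
   converges.  Finally [x |-> T^n x + n v] is (firmly) nonexpansive whenever
   [T] is, and both properties are closed inequalities, hence preserved by
   pointwise limits. *)

From Stdlib Require Import Reals Lra.
Open Scope R_scope.

Lemma Un_cv_const (c : R) : Un_cv (fun _ => c) c.
Proof.
  intros e He; exists 0%nat; intros n _.
  unfold Rdist; rewrite Rminus_diag, Rabs_R0; exact He.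
Qed.

Lemma continuous_le_lim (h : R -> R) (u : nat -> R) (l c : R) :
  continuity h -> Un_cv u l -> (forall n, h (u n) <= c) -> h l <= c.
Proof.
  intros Hh Hu Hle.
  exact (Rle_cv_lim Hle (continuity_seq h u l (Hh l) Hu) (Un_cv_const c)).
Qed.

Lemma scaled_decreasing_bounded_cv (u : nat -> R) (c M : R) :
  c <> 0 -> (forall n, c * u (S n) <= c * u n) -> (forall n, Rabs (u n) <= M) ->
  exists l, Un_cv u l.
Proof.
  intros Hc Hdec Hbd.
  assert (Hlb : has_lb (fun n => c * u n)).
  { exists (Rabs c * M); intros y [n ->]; unfold opp_seq.
    apply (Rle_trans _ (Rabs (- (c * u n)))); [apply RRle_abs|].
    rewrite Rabs_Ropp, Rabs_mult.
    apply Rmult_le_compat_l; [apply Rabs_pos | apply Hbd]. }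
  destruct (decreasing_cv _ Hdec Hlb) as [l Hl].
  exists (l / c).
  apply (Un_cv_ext (fun n => c * u n / c)); [intro n; field; exact Hc|].
  apply (continuity_seq (fun t => t / c)); [reg | exact Hl].
Qed.

Lemma closure_incl (S : R -> Prop) (w : R) : S w -> closure S w.
Proof.
  intros Hw e He; exists w; split; [exact Hw|].
  rewrite Rminus_diag, Rabs_R0; exact He.
Qed.

Lemma nonexpansive_continuous (T : R -> R) : nonexpansive T -> continuity T.
Proof.
  intros HT x e He; exists e; split; [exact He|].
  intros y [_ Hy]; simpl in *; unfold R_dist in *.
  exact (Rle_lt_trans _ _ _ (HT y x) Hy).
Qed.

Lemma nonexpansive_iter (T : R -> R) (n : nat) :
  nonexpansive T -> nonexpansive (Nat.iter n T).
Proof.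
  intros HT; induction n as [|n IH]; intros x y; simpl; [lra|].
  exact (Rle_trans _ _ _ (HT _ _) (IH x y)).
Qed.

Lemma nonexpansive_add_const (f : R -> R) (c : R) :
  nonexpansive f -> nonexpansive (fun x => f x + c).
Proof.
  intros Hf x y; replace (f x + c - (f y + c)) with (f x - f y) by ring; apply Hf.
Qed.

Lemma sqr_le_mul_between (a b : R) : a ^ 2 <= a * b <-> 0 <= a <= b \/ b <= a <= 0.
Proof.
  split.
  - intros H; destruct (Rtotal_order a 0) as [Ha|[Ha|Ha]].
    + right; destruct (Rle_dec b a); [lra | nra].
    + subst a; destruct (Rle_dec 0 b); lra.
    + left; destruct (Rle_dec a b); [lra | nra].
  - intros [[H1 H2]|[H1 H2]]; nra.
Qed.

Lemma firmly_nonexpansive_between (T : R -> R) :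
  firmly_nonexpansive T <->
  forall x y, 0 <= T x - T y <= x - y \/ x - y <= T x - T y <= 0.
Proof.
  split; intros H x y; specialize (H x y).
  - apply sqr_le_mul_between; nra.
  - apply sqr_le_mul_between in H; nra.
Qed.

Lemma firmly_nonexpansive_iter (T : R -> R) (n : nat) :
  firmly_nonexpansive T -> firmly_nonexpansive (Nat.iter n T).
Proof.
  rewrite !firmly_nonexpansive_between; intros HT.
  induction n as [|n IH]; intros x y; simpl; [lra|].
  specialize (HT (Nat.iter n T x) (Nat.iter n T y)); specialize (IH x y); lra.
Qed.

Lemma firmly_nonexpansive_add_const (f : R -> R) (c : R) :
  firmly_nonexpansive f -> firmly_nonexpansive (fun x => f x + c).
Proof.
  intros Hf x y.
  replace (f x + c - (f y + c)) with (f x - f y) by ring.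
  replace (x - (f x + c) - (y - (f y + c))) with (x - f x - (y - f y)) by ring.
  apply Hf.
Qed.

Lemma nonexpansive_pointwise_lim (f : nat -> R -> R) (L : R -> R) :
  (forall n, nonexpansive (f n)) -> (forall x, Un_cv (fun n => f n x) (L x)) ->
  nonexpansive L.
Proof.
  intros Hf HL x y.
  apply (continuous_le_lim Rabs (fun n => f n x - f n y));
    [exact Rcontinuity_abs | exact (CV_minus _ _ _ _ (HL x) (HL y)) | intro n; apply Hf].
Qed.

Lemma firmly_nonexpansive_pointwise_lim (f : nat -> R -> R) (L : R -> R) :
  (forall n, firmly_nonexpansive (f n)) -> (forall x, Un_cv (fun n => f n x) (L x)) ->
  firmly_nonexpansive L.
Proof.
  intros Hf HL x y.
  set (h := fun a => a ^ 2 + ((x - y) - a) ^ 2).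
  replace ((L x - L y) ^ 2 + (x - L x - (y - L y)) ^ 2) with (h (L x - L y))
    by (unfold h; ring).
  apply (continuous_le_lim h (fun n => f n x - f n y));
    [unfold h; reg | exact (CV_minus _ _ _ _ (HL x) (HL y)) |].
  intro n; specialize (Hf n x y); unfold h; lra.
Qed.

Lemma displacement_constant_sign (T : R -> R) :
  nonexpansive T -> (forall x, ~ Fix T x) ->
  forall x y, 0 < (x - T x) * (y - T y).
Proof.
  intros HT Hfree.
  assert (Hg : continuity (fun x => x - T x))
    by exact (continuity_minus _ _ (derivable_continuous _ derivable_id)
                            (nonexpansive_continuous T HT)).
  assert (Hle : forall x y, x <= y -> 0 < (x - T x) * (y - T y)).
  { intros x y Hxy; apply Rnot_le_lt; intros Hneg.
    destruct (IVT_cor _ x y Hg Hxy Hneg) as [z [_ Hz]].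
    apply (Hfree z); unfold Fix; lra. }
  intros x y; destruct (Rle_dec x y); [now apply Hle|].
  rewrite Rmult_comm; apply Hle; lra.
Qed.

Section MinimalDisplacement.

Variables (T : R -> R) (v : R).
Hypothesis HT : nonexpansive T.
Hypothesis Hfree : forall x, ~ Fix T x.
Hypothesis Hmin : is_min_disp T v.
Hypothesis Hv : ran_IdmT T v.

Lemma min_disp_le_displacement (z : R) : 0 <= v * ((z - T z) - v).
Proof.
  destruct Hv as [x0 Hx0].
  pose proof (displacement_constant_sign T HT Hfree z x0) as Hsign.
  rewrite Hx0 in Hsign.
  pose proof (proj2 Hmin _ (closure_incl _ _ (ex_intro _ z eq_refl))) as Hle.
  destruct (Rle_dec 0 v).
  - rewrite (Rabs_right v), (Rabs_right (z - T z)) in Hle; nra.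
  - rewrite (Rabs_left v), (Rabs_left (z - T z)) in Hle; nra.
Qed.

Lemma min_disp_invariant (y : R) : y - T y = v -> T y - T (T y) = v.
Proof.
  intros Hy.
  pose proof (min_disp_le_displacement (T y)) as Hge.
  pose proof (displacement_constant_sign T HT Hfree (T y) y) as Hsign.
  pose proof (HT y (T y)) as Hne; rewrite Hy in Hsign, Hne.
  destruct (Rle_dec 0 v).
  - assert (0 < T y - T (T y)) by nra.
    rewrite !Rabs_right in Hne by lra; apply Rle_antisym; nra.
  - assert (T y - T (T y) < 0) by nra.
    rewrite !Rabs_left in Hne by lra; apply Rle_antisym; nra.
Qed.

Lemma iter_min_disp (x0 : R) (n : nat) :
  x0 - T x0 = v -> Nat.iter n T x0 = x0 - INR n * v.
Proof.
  intros Hx0.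
  assert (Hdisp : forall k, Nat.iter k T x0 - T (Nat.iter k T x0) = v).
  { induction k as [|k IH]; [exact Hx0 | exact (min_disp_invariant _ IH)]. }
  induction n as [|n IH]; [simpl; ring|].
  change (Nat.iter (S n) T x0) with (T (Nat.iter n T x0)).
  rewrite S_INR; pose proof (Hdisp n); lra.
Qed.

Lemma shifted_orbit_cv (x : R) :
  exists l, Un_cv (fun n => Nat.iter n T x + INR n * v) l.
Proof.
  destruct Hv as [x0 Hx0].
  apply (scaled_decreasing_bounded_cv _ v (Rabs x0 + Rabs (x - x0))).
  - intros Hv0; apply (Hfree x0); unfold Fix; lra.
  - intros n; change (Nat.iter (S n) T x) with (T (Nat.iter n T x)).
    rewrite S_INR; pose proof (min_disp_le_displacement (Nat.iter n T x)); nra.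
  - intros n.
    replace (Nat.iter n T x + INR n * v)
      with (x0 + (Nat.iter n T x - Nat.iter n T x0)) by (rewrite (iter_min_disp x0 n Hx0); ring).
    eapply Rle_trans; [apply Rabs_triang|].
    apply Rplus_le_compat_l, (nonexpansive_iter T n HT).
Qed.

End MinimalDisplacement.

Theorem proposition2p6 (T : R -> R) (v : R) :
  nonexpansive T ->
  (forall x, ~ Fix T x) ->
  is_min_disp T v ->
  ran_IdmT T v ->
  (forall x : R, exists l : R,
      Un_cv (fun n : nat => Nat.iter n T x + INR n * v) l) /\
  (forall L : R -> R,
      (forall x, Un_cv (fun n : nat => Nat.iter n T x + INR n * v) (L x)) ->
      nonexpansive L) /\
  (firmly_nonexpansive T ->
   forall L : R -> R,
      (forall x, Un_cv (fun n : nat => Nat.iter n T x + INR n * v) (L x)) ->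
      firmly_nonexpansive L).
Proof.
  intros HT Hfree Hmin Hv.
  split; [|split].
  - exact (shifted_orbit_cv T v HT Hfree Hmin Hv).
  - intros L HL.
    apply (nonexpansive_pointwise_lim (fun n x => Nat.iter n T x + INR n * v) L); [|exact HL].
    intros n; apply nonexpansive_add_const, nonexpansive_iter, HT.
  - intros HF L HL.
    apply (firmly_nonexpansive_pointwise_lim (fun n x => Nat.iter n T x + INR n * v) L); [|exact HL].
    intros n; apply firmly_nonexpansive_add_const, firmly_nonexpansive_iter, HF.
Qed.
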